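(* Problem (RO-$\Sigma$) has an optimal solution $(B,\beta_1,\ldots,\beta_B)$ such that $c\prec_{\beta_1\cdots\beta_B}c'$ for all contests $c<c'$ with $c\equiv c'$.
   Context: A ballot style consists of contests $\mathcal{C}=\{1,\ldots,C\}$, candidates $\mathcal{N}=\{1,\ldots,N\}$ partitioned into nonempty sets $\mathcal{N}_c$ ($c\in\mathcal{C}$), and positive integers $v_c$. A filled-out ballot is a subset $\beta\subseteq\mathcal{N}$; $\mathscr{B}=\{\beta\subseteq\mathcal{N}: |\mathcal{N}_c\cap\beta|\le v_c\ \forall c\}$. For $i\in\mathcal{N}_c$: $T^*_i(\beta_1,\ldots,\beta_B)=\sum_{b=1}^B\mathbb{I}\{i\in\beta_b\text{ and }|\mathcal{N}_c\cap\beta_b|\le v_c\}$, and for a bijection $\sigma$ of $\mathcal{N}$, $T^\sigma_i(\beta_1,\ldots,\beta_B)=\sum_{b=1}^B\mathbb{I}\{\sigma(i)\in\beta_b\text{ and }|\{\sigma(j)\in\beta_b: j\in\mathcal{N}_c\}|\le v_c\}$. $\Sigma$ is the set of non-identity bijections $\mathcal{N}\to\mathcal{N}$. Problem (RO-$\Sigma$): minimize $B$ over $B\in\mathbb{N}$ and $\beta_1,\ldots,\beta_B\in\mathscr{B}$ subject to $T^\sigma(\beta_1,\ldots,\beta_B)\neq T^*(\beta_1,\ldots,\beta_B)$ for all $\sigma\in\Sigma$. Two contests $c,c'$ are equivalent, $c\equiv c'$, iff $|\mathcal{N}_c|=|\mathcal{N}_{c'}|$ and $v_c=v_{c'}$.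 $\mathcal{N}_c^k$ denotes the candidate with the $k$-th smallest index in $\mathcal{N}_c$. With $n(i)=|\{b\in\{1,\ldots,B\}: i\in\beta_b\}|$, we write $c\prec_{\beta_1\cdots\beta_B}c'$ iff $c\equiv c'$ and there exists $k\in\{1,\ldots,|\mathcal{N}_c|\}$ with $n(\mathcal{N}_c^{m})=n(\mathcal{N}_{c'}^{m})$ for all $m\in\{k+1,\ldots,|\mathcal{N}_c|\}$ and $n(\mathcal{N}_c^{k})<n(\mathcal{N}_{c'}^{k})$. *)

From mathcomp Require Import all_boot fingroup perm.
Set Implicit Arguments. Unset Strict Implicit. Unset Printing Implicit Defensive.

(* Ballot style: candidates 'I_N, contests 'I_C, [con i] = the contest of
   candidate i (so N_c = [set i | con i == c]), vote limits [v c]. *)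

Definition Ncands (N C : nat) (con : 'I_N -> 'I_C) (c : 'I_C) : {set 'I_N} :=
  [set i | con i == c].

Definition valid_ballot (N C : nat) (con : 'I_N -> 'I_C) (v : 'I_C -> nat)
  (b : {set 'I_N}) : Prop :=
  forall c : 'I_C, #|Ncands con c :&: b| <= v c.

Definition Tstar (N C : nat) (con : 'I_N -> 'I_C) (v : 'I_C -> nat)
  (bs : seq {set 'I_N}) : {ffun 'I_N -> nat} :=
  [ffun i => \sum_(b <- bs)
     ((i \in b) && (#|Ncands con (con i) :&: b| <= v (con i)))].

Definition Tsigma (N C : nat) (con : 'I_N -> 'I_C) (v : 'I_C -> nat)
  (s : {perm 'I_N}) (bs : seq {set 'I_N}) : {ffun 'I_N -> nat} :=
  [ffun i => \sum_(b <- bs)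
     ((s i \in b) &&
      (#|[set s j | j in Ncands con (con i)] :&: b| <= v (con i)))].

(* Feasibility for (RO-Σ): all ballots valid and T^σ ≠ T^* for every
   non-identity bijection σ. B = size bs. *)
Definition feasible (N C : nat) (con : 'I_N -> 'I_C) (v : 'I_C -> nat)
  (bs : seq {set 'I_N}) : Prop :=
  (forall b, b \in bs -> valid_ballot con v b) /\
  (forall s : {perm 'I_N}, s != 1%g -> Tsigma con v s bs <> Tstar con v bs).

Definition equiv_contest (N C : nat) (con : 'I_N -> 'I_C) (v : 'I_C -> nat)
  (c c' : 'I_C) : Prop :=
  #|Ncands con c| = #|Ncands con c'| /\ v c = v c'.

Definition nb (N : nat) (bs : seq {set 'I_N}) (i : 'I_N) : nat :=
  count (fun b : {set 'I_N} => i \in b) bs.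

(* n(N_c^k), k = 1..|N_c|: N_c^k is the k-th smallest index in N_c. *)
Definition nck (N C : nat) (con : 'I_N -> 'I_C) (bs : seq {set 'I_N})
  (c : 'I_C) (k : nat) : nat :=
  nth 0 [seq nb bs i | i <- sort (fun i j : 'I_N => (i <= j)%N)
                                  (enum (Ncands con c))] k.-1.

Definition prec (N C : nat) (con : 'I_N -> 'I_C) (v : 'I_C -> nat)
  (bs : seq {set 'I_N}) (c c' : 'I_C) : Prop :=
  equiv_contest con v c c' /\
  exists k, 1 <= k <= #|Ncands con c| /\
    (forall m, k + 1 <= m <= #|Ncands con c| -> nck con bs c m = nck con bs c' m) /\
    nck con bs c k < nck con bs c' k.

From mathcomp Require Import all_boot fingroup perm.
From mathcomp Require Import zify.
From Stdlib Require Import Classical.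
Set Implicit Arguments. Unset Strict Implicit. Unset Printing Implicit Defensive.

(* Relabelling the ballots by a symmetry of the ballot style (a permutation of
   the candidates mapping contests onto contests with the same vote limit)
   preserves feasibility and the number of ballots.  To every contest d we
   attach a key: its vector of counts (n(N_d^1), ..., n(N_d^|N_d|)) read as a
   base-(B+1) numeral whose most significant digit is the count of the largest
   candidate, so that key c < key c' implies c ≺ c' for equivalent contests.
   The potential of a solution is the sum of d * key d over all contests.

   Singleton ballots give a feasible solution, hence an optimal one exists;
   among optimal solutions, all of the same size, the potential is bounded, so
   we take one of maximal potential.  For equivalent contests c < c', keys
   cannot be equal (swapping N_c^k and N_{c'}^k for all k would be a
   nontrivial symmetry fixing every count, contradicting feasibility), and
   key c > key c' is impossible (the swapped solution is optimal and has a
   larger potential); hence key c < key c', i.e. c ≺ c'. *)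

Lemma ex_minimizer (T : Type) (P : T -> Prop) (f : T -> nat) (x0 : T) :
  P x0 -> exists x, P x /\ forall y, P y -> f x <= f y.
Proof.
suff minimizer n : forall x, P x -> f x <= n ->
    exists x, P x /\ forall y, P y -> f x <= f y.
  by move=> Px0; apply: (minimizer (f x0) x0).
elim: n => [|n IH] x Px fx_le.
  by exists x; split => // y _; apply: leq_trans fx_le _.
have [[y [Py fy_lt]]|no_smaller] := classic (exists y, P y /\ f y < f x).
  by apply: (IH y) => //; lia.
exists x; split => // y Py; rewrite leqNgt; apply/negP => fy_lt.
by apply: no_smaller; exists y.
Qed.

Lemma ex_maximizer (T : Type) (P : T -> Prop) (f : T -> nat) (M : nat) (x0 : T) :
  (forall x, P x -> f x <= M) -> P x0 ->
  exists x, P x /\ forall y, P y -> f y <= f x.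
Proof.
move=> f_bounded Px0; have [x [Px x_min]] := ex_minimizer (fun x => M - f x) Px0.
exists x; split => // y Py.
by have := x_min y Py; have := f_bounded x Px; have := f_bounded y Py; lia.
Qed.

Lemma sum_bool_count (T : Type) (P : pred T) (s : seq T) :
  \sum_(x <- s) (P x : nat) = count P s.
Proof. by elim: s => [|y s IH]; rewrite ?big_nil ?big_cons ?IH. Qed.

Section BaseExpansion.
Variable x : nat.

Definition base_val (a : nat -> nat) (L : nat) : nat := \sum_(k < L) a k * x ^ k.

Lemma base_valS a L : base_val a L.+1 = base_val a L + a L * x ^ L.
Proof. by rewrite /base_val big_ord_recr. Qed.

Lemma base_val_lt a L : (forall k, a k < x) -> base_val a L < x ^ L.
Proof.
move=> a_lt; elim: L => [|L IH]; first by rewrite /base_val big_ord0.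
rewrite base_valS expnS; have := a_lt L; move: IH.
set S := base_val a L; set X := x ^ L; nia.
Qed.

Lemma base_val_lex a b L : (forall k, a k < x) -> (forall k, b k < x) ->
  base_val a L < base_val b L ->
  exists k, k < L /\ a k < b k /\ (forall j, k < j < L -> a j = b j).
Proof.
move=> a_lt b_lt; elim: L => [|L IH]; first by rewrite /base_val !big_ord0.
have ha := base_val_lt L a_lt; have hb := base_val_lt L b_lt.
rewrite !base_valS; have [lt|gt|eq] := ltngtP (a L) (b L).
- by move=> _; exists L; split => //; split => // j; lia.
- have := leq_mul gt (leqnn (x ^ L)); rewrite mulSn; lia.
- rewrite eq ltn_add2r => /IH [k [kL [ab_k above]]].
  exists k; split; first lia; split => // j /andP [kj jL].
  have [jL'|Lj] := ltnP j L; first by apply: above; rewrite kj.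
  by have -> : j = L by lia.
Qed.

Lemma base_val_inj a b L : (forall k, a k < x) -> (forall k, b k < x) ->
  base_val a L = base_val b L -> forall k, k < L -> a k = b k.
Proof.
move=> a_lt b_lt; elim: L => [|L IH] //.
have ha := base_val_lt L a_lt; have hb := base_val_lt L b_lt.
rewrite !base_valS; have [lt|gt|eq] := ltngtP (a L) (b L).
- have := leq_mul lt (leqnn (x ^ L)); rewrite mulSn; lia.
- have := leq_mul gt (leqnn (x ^ L)); rewrite mulSn; lia.
- rewrite eq => /addIn /IH eq_below k; rewrite ltnS leq_eqVlt.
  by case/orP => [/eqP -> //|]; apply: eq_below.
Qed.

End BaseExpansion.

Section BallotStyle.
Variables (N C : nat) (con : 'I_N -> 'I_C) (v : 'I_C -> nat).
Hypothesis contests_nonempty : forall c : 'I_C, exists i : 'I_N, con i = c.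
Implicit Types (bs : seq {set 'I_N}) (b : {set 'I_N}) (p s : {perm 'I_N}) (c d : 'I_C).

(* On valid ballots the validity test in T^* is vacuous: T^*_i = n(i). *)
Lemma Tstar_nb bs : (forall b, b \in bs -> valid_ballot con v b) ->
  forall i, Tstar con v bs i = nb bs i.
Proof.
move=> bs_valid i; rewrite ffunE /nb -sum_bool_count; apply: eq_big_seq => b b_in.
by rewrite (bs_valid b b_in (con i)) andbT.
Qed.

Lemma Tstar_Tsigma1 bs : Tstar con v bs = Tsigma con v 1%g bs.
Proof.
apply/ffunP => i; rewrite !ffunE perm1; apply: eq_bigr => b _.
suff -> : [set (1%g : {perm 'I_N}) j | j in Ncands con (con i)] = Ncands con (con i).
  by [].
by rewrite -[RHS]imset_id; apply: eq_imset => j; rewrite perm1.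
Qed.

Definition style_symmetry p : Prop :=
  forall i, Ncands con (con (p i)) = p @: Ncands con (con i) /\
            v (con (p i)) = v (con i).

Definition relabel p bs : seq {set 'I_N} := [seq p @: b | b <- bs].

Lemma nb_relabel p bs i : nb (relabel p bs) (p i) = nb bs i.
Proof.
by rewrite /nb count_map; apply: eq_count => b /=; rewrite mem_imset //; apply: perm_inj.
Qed.

Lemma Tsigma_relabel p s bs : style_symmetry p ->
  forall i, Tsigma con v s (relabel p bs) (p i) = Tsigma con v (p * s * p^-1)%g bs i.
Proof.
move=> p_sym i; have [Ncands_p v_p] := p_sym i.
rewrite !ffunE big_map; apply: eq_bigr => b _.
have conj_s j : s (p j) = p ((p * s * p^-1)%g j) by rewrite !permM permKV.
rewrite conj_s mem_imset ?Ncands_p ?v_p; last exact: perm_inj.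
rewrite -imset_comp (eq_imset _ conj_s) imset_comp -imsetI; last first.
  by move=> x y _ _; apply: perm_inj.
by rewrite card_imset //; apply: perm_inj.
Qed.

Lemma feasible_relabel p bs : style_symmetry p ->
  feasible con v bs -> feasible con v (relabel p bs).
Proof.
move=> p_sym [bs_valid bs_sep]; split.
  move=> _ /mapP [b b_in ->] c; have [j <-] := contests_nonempty c.
  have [Ncands_p v_p] := p_sym (p^-1 j)%g.
  rewrite -(permKV p j) Ncands_p -imsetI; last by move=> x y _ _; apply: perm_inj.
  by rewrite card_imset ?v_p; [apply: bs_valid | apply: perm_inj].
move=> s s_neq1 eq_T; apply: (bs_sep (p * s * p^-1)%g).
  apply: contra s_neq1 => /eqP conj1; apply/eqP.
  have -> : s = (p^-1 * (p * s * p^-1) * p)%g by rewrite !mulgA mulVg mul1g mulgKV.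
  by rewrite conj1 mulg1 mulVg.
apply/ffunP => i; rewrite -Tsigma_relabel // eq_T Tstar_Tsigma1 Tsigma_relabel //.
by rewrite mulg1 mulgV -Tstar_Tsigma1.
Qed.

Lemma Tsigma_symmetry p bs : style_symmetry p ->
  (forall b, b \in bs -> valid_ballot con v b) ->
  forall i, Tsigma con v p bs i = nb bs (p i).
Proof.
move=> p_sym bs_valid i; have [Ncands_p v_p] := p_sym i.
by rewrite -Tstar_nb // !ffunE; apply: eq_bigr => b _; rewrite Ncands_p v_p.
Qed.

Lemma symmetry_fixing_counts p bs : feasible con v bs -> style_symmetry p ->
  (forall i, nb bs (p i) = nb bs i) -> p = 1%g.
Proof.
move=> [bs_valid bs_sep] p_sym nb_p; apply/eqP; apply: contraT => p_neq1.
case: (bs_sep p p_neq1); apply/ffunP => i.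
by rewrite Tsigma_symmetry // nb_p Tstar_nb.
Qed.

Definition sorted_cands d : seq 'I_N :=
  sort (fun i j : 'I_N => (i <= j)%N) (enum (Ncands con d)).

Lemma sorted_cands_uniq d : uniq (sorted_cands d).
Proof. by rewrite sort_uniq enum_uniq. Qed.

Lemma mem_sorted_cands d i : (i \in sorted_cands d) = (con i == d).
Proof. by rewrite mem_sort mem_enum inE. Qed.

Lemma size_sorted_cands d : size (sorted_cands d) = #|Ncands con d|.
Proof. by rewrite size_sort cardE. Qed.

Definition transfer d d' (i : 'I_N) : 'I_N :=
  nth i (sorted_cands d') (index i (sorted_cands d)).

Lemma con_transfer d d' i : #|Ncands con d| = #|Ncands con d'| ->
  con i = d -> con (transfer d d' i) = d'.
Proof.
move=> card_dd' con_i; apply/eqP; rewrite -mem_sorted_cands; apply: mem_nth.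
by rewrite size_sorted_cands -card_dd' -size_sorted_cands index_mem mem_sorted_cands con_i.
Qed.

Lemma transferK d d' i : #|Ncands con d| = #|Ncands con d'| ->
  con i = d -> transfer d' d (transfer d d' i) = i.
Proof.
move=> card_dd' con_i; have i_in : i \in sorted_cands d by rewrite mem_sorted_cands con_i.
have idx_lt : index i (sorted_cands d) < size (sorted_cands d').
  by rewrite size_sorted_cands -card_dd' -size_sorted_cands index_mem.
rewrite /transfer index_uniq ?sorted_cands_uniq //.
by rewrite (set_nth_default i) ?nth_index // size_sorted_cands card_dd' -size_sorted_cands.
Qed.

Lemma nckE bs d k : nck con bs d k.+1 = nth 0 (map (nb bs) (sorted_cands d)) k.
Proof. by []. Qed.

(* Counts are at most B, so they are digits in base B+1. *)
Lemma nck_lt bs d k : nck con bs d k.+1 < (size bs).+1.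
Proof.
rewrite nckE ltnS; have [k_lt|k_ge] := ltnP k (size (map (nb bs) (sorted_cands d))).
  by have /mapP [i _ ->] := mem_nth 0 k_lt; apply: count_size.
by rewrite nth_default.
Qed.

(* The key of contest d encodes its count vector in base B+1, the count of
   the largest candidate being the most significant digit, so that comparing
   keys of equivalent contests is the lexicographic order of ≺. *)
Definition key bs d : nat :=
  base_val (size bs).+1 (fun k => nck con bs d k.+1) #|Ncands con d|.

Definition potential bs : nat := \sum_(d : 'I_C) d * key bs d.

Lemma potential_bound bs : potential bs <= C * (C * (size bs).+1 ^ N).
Proof.
rewrite /potential -[X in X * _]card_ord -sum_nat_const.
apply: leq_sum => d _; apply: leq_mul; first exact: ltnW.
have key_lt : key bs d < (size bs).+1 ^ #|Ncands con d|.
  exact: base_val_lt (nck_lt bs d).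
apply: ltnW (leq_trans key_lt _).
by apply: leq_pexp2l => //; rewrite -[X in _ <= X]card_ord max_card.
Qed.

Lemma prec_of_key bs c c' : equiv_contest con v c c' ->
  key bs c < key bs c' -> prec con v bs c c'.
Proof.
move=> [card_cc' v_cc'] key_lt; split => //; rewrite /key -card_cc' in key_lt.
have [k [k_lt [digit_lt above]]] :=
  base_val_lex (nck_lt bs c) (nck_lt bs c') key_lt.
exists k.+1; split; first by apply/andP; split.
split => // m m_range; have -> : m = m.-1.+1 by lia.
by apply: above; lia.
Qed.

Section ContestSwap.
Variables c c' : 'I_C.
Hypotheses (c_neq : c != c') (c_card : #|Ncands con c| = #|Ncands con c'|).

Definition swap_contest d : 'I_C := if d == c then c' else if d == c' then c else d.

Lemma card_swap_contest d : #|Ncands con (swap_contest d)| = #|Ncands con d|.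
Proof.
rewrite /swap_contest; case: (eqVneq d c) => [->|_]; first by rewrite c_card.
by case: (eqVneq d c') => [->|_]; rewrite ?c_card.
Qed.

Lemma swap_contestK : involutive swap_contest.
Proof.
move=> d; rewrite /swap_contest.
case: (eqVneq d c) => [->|d_c]; first by rewrite eq_sym (negbTE c_neq) eqxx.
case: (eqVneq d c') => [->|d_c']; first by rewrite eqxx.
by rewrite (negbTE d_c) (negbTE d_c').
Qed.

Definition swap_fun (i : 'I_N) : 'I_N :=
  if con i == c then transfer c c' i
  else if con i == c' then transfer c' c i else i.

Lemma swap_funK : involutive swap_fun.
Proof.
move=> i; rewrite /swap_fun.
case: (eqVneq (con i) c) => [con_i|con_i].
  by rewrite con_transfer // eq_sym (negbTE c_neq) eqxx transferK.
case: (eqVneq (con i) c') => [con_i'|con_i'].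
  by rewrite con_transfer // eqxx transferK.
by rewrite (negbTE con_i) (negbTE con_i').
Qed.

Definition swap_perm : {perm 'I_N} := perm (inv_inj swap_funK).

Lemma swap_permE i : swap_perm i = swap_fun i.
Proof. by rewrite permE. Qed.

Lemma swap_permK : involutive swap_perm.
Proof. by move=> i; rewrite !swap_permE swap_funK. Qed.

Lemma con_swap_perm i : con (swap_perm i) = swap_contest (con i).
Proof.
rewrite swap_permE /swap_fun /swap_contest.
case: (eqVneq (con i) c) => [con_i|_]; first exact: con_transfer.
by case: (eqVneq (con i) c') => [con_i'|//]; apply: con_transfer.
Qed.

Lemma swap_perm_fix i : con i != c -> con i != c' -> swap_perm i = i.
Proof.
by move=> con_i con_i'; rewrite swap_permE /swap_fun (negbTE con_i) (negbTE con_i').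
Qed.

Lemma map_swap_sorted d : map swap_perm (sorted_cands d) = sorted_cands (swap_contest d).
Proof.
have swap_c' : map swap_perm (sorted_cands c') = sorted_cands c.
  case E: (sorted_cands c) => [|i0 s].
    by apply: size0nil; rewrite size_map size_sorted_cands -c_card -size_sorted_cands E.
  rewrite -E; apply: (eq_from_nth (x0 := i0)); first by rewrite size_map !size_sorted_cands.
  move=> k; rewrite size_map size_sorted_cands -c_card -size_sorted_cands => k_lt.
  have k_lt' : k < size (sorted_cands c').
    by rewrite size_sorted_cands -c_card -size_sorted_cands.
  have con_k : con (nth i0 (sorted_cands c') k) = c'.
    by apply/eqP; rewrite -mem_sorted_cands mem_nth.
  rewrite (nth_map i0) // swap_permE /swap_fun con_k eq_sym (negbTE c_neq) eqxx /transfer.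
  by rewrite index_uniq ?sorted_cands_uniq // (set_nth_default i0).
rewrite /swap_contest; case: (eqVneq d c) => [->|d_c].
  by rewrite -swap_c' -map_comp map_id_in // => i _ /=; apply: swap_permK.
case: (eqVneq d c') => [->//|d_c'].
apply: map_id_in => i; rewrite mem_sorted_cands => /eqP con_i.
by apply: swap_perm_fix; rewrite con_i.
Qed.

Lemma swap_perm_Ncands d : swap_perm @: Ncands con d = Ncands con (swap_contest d).
Proof.
apply/setP => i; rewrite -{1}(swap_permK i) mem_imset; last exact: perm_inj.
rewrite !inE con_swap_perm -{1}(swap_contestK d).
by rewrite (inj_eq (inv_inj swap_contestK)).
Qed.

Lemma swap_symmetry : v c = v c' -> style_symmetry swap_perm.
Proof.
move=> v_cc' i; rewrite con_swap_perm swap_perm_Ncands; split => //.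
rewrite /swap_contest; case: (eqVneq (con i) c) => [->//|_].
by case: (eqVneq (con i) c') => [->//|_].
Qed.

(* Since N_c is nonempty, the swap is not the identity. *)
Lemma swap_perm_neq1 : swap_perm != 1%g.
Proof.
have [i con_i] := contests_nonempty c; apply/eqP => /permP /(_ i).
move/(congr1 con); rewrite con_swap_perm perm1 con_i /swap_contest eqxx => c'_c.
by move: c_neq; rewrite c'_c eqxx.
Qed.

Lemma nck_relabel_swap bs d k :
  nck con (relabel swap_perm bs) d k.+1 = nck con bs (swap_contest d) k.+1.
Proof.
rewrite !nckE -[in LHS](swap_contestK d) -map_swap_sorted -map_comp.
by congr nth; apply: eq_map => i /=; rewrite nb_relabel.
Qed.

Lemma key_relabel_swap bs d :
  key (relabel swap_perm bs) d = key bs (swap_contest d).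
Proof.
rewrite /key size_map card_swap_contest.
by apply: eq_bigr => k _; rewrite nck_relabel_swap.
Qed.

Lemma potential_relabel_swap bs : c < c' -> key bs c' < key bs c ->
  potential bs < potential (relabel swap_perm bs).
Proof.
move=> lt_cc' key_gt.
have split_cc' (F : 'I_C -> nat) :
    \sum_(d : 'I_C) F d = F c + F c' + \sum_(d | (d != c) && (d != c')) F d.
  by rewrite (bigD1 c) //= (bigD1 c') 1?eq_sym //= addnA.
rewrite /potential !split_cc' !key_relabel_swap /swap_contest eqxx eq_sym (negbTE c_neq) eqxx.
have rest_eq : \sum_(d | (d != c) && (d != c')) d * key (relabel swap_perm bs) d =
               \sum_(d | (d != c) && (d != c')) d * key bs d.
  apply: eq_bigr => d /andP [d_c d_c'].
  by rewrite key_relabel_swap /swap_contest (negbTE d_c) (negbTE d_c').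
rewrite rest_eq; have := leq_mul lt_cc' key_gt; nia.
Qed.

(* Equivalent contests of a feasible solution have different keys: otherwise
   the swap would be a nontrivial symmetry preserving all counts. *)
Lemma key_swap_neq bs : v c = v c' -> feasible con v bs ->
  key bs c != key bs c'.
Proof.
move=> v_cc' bs_feas; apply/eqP => key_eq; apply: (negP swap_perm_neq1); apply/eqP.
apply: (symmetry_fixing_counts bs_feas (swap_symmetry v_cc')).
rewrite /key -c_card in key_eq.
have counts_eq := base_val_inj (nck_lt bs c) (nck_lt bs c') key_eq.
have nb_c : {in sorted_cands c, forall i, nb bs (swap_perm i) = nb bs i}.
  apply/eq_in_map; rewrite map_comp map_swap_sorted /swap_contest eqxx.
  apply: (eq_from_nth (x0 := 0)); first by rewrite !size_map !size_sorted_cands.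
  move=> k; rewrite size_map size_sorted_cands -c_card => k_lt.
  by rewrite -!nckE counts_eq.
move=> i; case: (eqVneq (con i) c) => [con_i|con_i].
  by apply: nb_c; rewrite mem_sorted_cands con_i.
case: (eqVneq (con i) c') => [con_i'|con_i'].
  have swap_i_in : swap_perm i \in sorted_cands c.
    rewrite mem_sorted_cands con_swap_perm con_i' /swap_contest.
    by rewrite [c' == c]eq_sym (negbTE c_neq) eqxx.
  by rewrite -[in RHS](swap_permK i) (nb_c _ swap_i_in).
by rewrite swap_perm_fix.
Qed.

End ContestSwap.

Hypothesis vote_limits_pos : forall c, 0 < v c.

Lemma small_ballot_ok (A b : {set 'I_N}) c : #|b| <= 1 -> #|A :&: b| <= v c.
Proof.
move=> b_small; apply: leq_trans (vote_limits_pos c).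
by apply: leq_trans b_small; rewrite subset_leq_card ?subsetIr.
Qed.

(* Candidate i marked alone on i ballots: all counts n(i) = i are distinct. *)
Definition singleton_ballots : seq {set 'I_N} :=
  flatten [seq nseq i [set i] | i : 'I_N <- enum 'I_N].

Lemma singleton_ballots_card b : b \in singleton_ballots -> #|b| <= 1.
Proof.
by case/flattenP => _ /mapP [i _ ->]; rewrite mem_nseq => /andP [_ /eqP ->]; rewrite cards1.
Qed.

Lemma nb_singleton_ballots j : nb singleton_ballots j = j.
Proof.
rewrite /nb /singleton_ballots count_flatten -map_comp sumnE big_map.
under eq_bigr => i _ do rewrite /= count_nseq in_set1.
rewrite big_enum /= (bigD1 j) //= eqxx mul1n big1 ?addn0 // => i i_neq.
by rewrite eq_sym (negbTE i_neq).
Qed.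

(* Singleton ballots form a feasible solution: T^σ_i = n(σ i) = σ i. *)
Lemma feasible_singleton_ballots : feasible con v singleton_ballots.
Proof.
have valid b : b \in singleton_ballots -> valid_ballot con v b.
  by move=> /singleton_ballots_card b_small c; apply: small_ballot_ok.
split => // s s_neq1 eq_T; apply: (negP s_neq1); apply/eqP/permP => i.
have /(congr1 (fun T : {ffun 'I_N -> nat} => T i)) := eq_T.
rewrite Tstar_nb // ffunE (eq_big_seq (fun b => (s i \in b) : nat)); last first.
  by move=> b /singleton_ballots_card b_small; rewrite small_ballot_ok ?andbT.
by rewrite sum_bool_count -/(nb _ (s i)) !nb_singleton_ballots perm1 => /val_inj.
Qed.

End BallotStyle.

Theorem proposition2 (C N : nat) (con : 'I_N -> 'I_C) (v : 'I_C -> nat)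
  (Hnonempty : forall c : 'I_C, exists i : 'I_N, con i = c)
  (Hv : forall c : 'I_C, 0 < v c) :
  exists bs : seq {set 'I_N},
    feasible con v bs /\
    (forall bs' : seq {set 'I_N}, feasible con v bs' -> size bs <= size bs') /\
    (forall c c' : 'I_C, c < c' -> equiv_contest con v c c' -> prec con v bs c c').
Proof.
pose optimal bs := feasible con v bs /\
  forall bs' : seq {set 'I_N}, feasible con v bs' -> size bs <= size bs'.
have [bs_min bs_min_opt] : exists bs, optimal bs :=
  ex_minimizer size (feasible_singleton_ballots con Hv).
have potential_le bs : optimal bs -> potential con bs <= C * (C * (size bs_min).+1 ^ N).
  move=> [bs_feas bs_le]; have <- : size bs = size bs_min.
    by apply/eqP; rewrite eqn_leq (bs_le _ bs_min_opt.1) (bs_min_opt.2 _ bs_feas).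
  exact: potential_bound.
have [bs [[bs_feas bs_le] bs_max]] := ex_maximizer potential_le bs_min_opt.
exists bs; split=> //; split=> // c c' lt_cc' equiv_cc'.
have c_neq : c != c' by rewrite neq_ltn lt_cc'.
have [card_cc' v_cc'] := equiv_cc'.
have [key_lt|key_gt|key_eq] := ltngtP (key con bs c) (key con bs c').
- exact: prec_of_key.
- pose bs' := relabel (swap_perm c_neq card_cc') bs.
  have bs'_opt : optimal bs'.
    split; last by move=> bs'' /bs_le; rewrite size_map.
    by apply: (feasible_relabel Hnonempty (swap_symmetry c_neq card_cc' v_cc')).
  by have := bs_max bs' bs'_opt; rewrite leqNgt potential_relabel_swap.
- by have := key_swap_neq Hnonempty c_neq card_cc' v_cc' bs_feas; rewrite key_eq eqxx.
Qed.
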